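(* Consider two predator species $i=1,2$, each feeding on the same prey population according to the model described in the context, with quantities for predator $i$ carrying subscript $i$ ($\psi_i$, $\tilde A_{i,t}$, $\tilde X_{i,t}$, $Y_{i,t}$). Suppose Assumptions (A) and (B) hold (for each predator), that $\mathbb{E}(X_t)\propto t$ for all $t\ge0$, and that for all $t\ge0$, $\tilde A_{1,t}\le_{lr}\tilde A_{2,t}$ and \[ \mathbb{E}(\tilde{A}_{1,t})\, \psi_{1}(t) = \mathbb{E}(\tilde{A}_{2,t})\, \psi_{2}(t). \] Then $\psi_1(t)\ge\psi_2(t)$ and \[ \frac{\mathrm{var}(Y_{1,t})}{\mathbb{E}(Y_{1,t})} \leq \frac{\mathrm{var}(Y_{2,t})}{\mathbb{E}(Y_{2,t})} \] for all $t\ge0$.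
   Context: Model. The parasite burden of a prey aged $t\ge 0$ is $X_t$, where $(X_t)_{t\ge0}$ is a non-decreasing integer-valued stochastic process with $X_0=0$ (moments assumed finite, denominators positive). Prey ages have probability density $f_A$ on $[0,\infty)$. Predator $i$ encounters random prey at the times of a non-homogeneous Poisson process with intensity $\phi_i$; a predator $i$ aged $t$ consumes an encountered prey aged $u$ with probability $p_i(u,t)$. The consumption times form a Poisson process with intensity $\psi_i(t)=\phi_i(t)\int_0^\infty p_i(u,t)f_A(u)\,du$. The age $\tilde A_{i,t}$ of a prey consumed by predator $i$ aged $t$ has density $p_i(a,t)f_A(a)/\int_0^\infty p_i(u,t)f_A(u)\,du$, and $\tilde X_{i,t}=X_{\tilde A_{i,t}}$ (with $\tilde A_{i,t}$ independent of $X$). Consumed prey transfer all parasites, contributions being independent; the burden $Y_{i,t}$ of predator $i$ at age $t$ ($Y_{i,0}=0$) is the sum over consumption times $s\le t$ of independent copies of $\tilde X_{i,s}$, so $\mathbb{E}(Y_{i,t})=\int_0^t\mathbb{E}(\tilde X_{i,s})\psi_i(s)ds$, $\mathrm{var}(Y_{i,t})=\int_0^t\mathbb{E}(\tilde X_{i,s}^2)\psi_i(s)ds$. Likelihood ratio order: for random variables $U,V$ (both discrete or both continuous) with mass/density functions $p_U,p_V$, $U\le_{lr}V$ means $p_V(w)/p_U(w)$ is non-decreasing in $w$ over the union of the supports. Assumption (A): for all $0\le s\le t$, $X_s\le_{lr}X_t$. Assumption (B) (for predator $i$): for all $0\le s<t$, $p_i(u,t)/p_i(u,s)$ is non-decreasing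 in $u$. *)

From HB Require Import structures.
From mathcomp Require Import all_boot all_order all_algebra.
From mathcomp Require Import all_classical all_reals all_analysis.
Set Implicit Arguments. Unset Strict Implicit. Unset Printing Implicit Defensive.
Import Order.TTheory GRing.Theory Num.Theory.
Local Open Scope classical_set_scope.
Local Open Scope ring_scope.

Section Defs.
Variable R : realType.
Local Notation leb := (@lebesgue_measure R).

(** ratio b/a with the convention b/0 = +oo (only used on the union of the
    supports, so 0/0 never matters). *)
Definition lr_ratio (a b : R) : \bar R :=
  if a == 0 then +oo%E else (b / a)%:E.

(** Likelihood ratio order U <=_lr V for mass/density functions pU, pV
    on the domain D: pV/pU non-decreasing over the union of the supports. *)
Definition lr_le {d} {T : porderType d} (D : set T) (pU pV : T -> R) : Prop :=
  forall w1 w2, D w1 -> D w2 -> (w1 <= w2)%O ->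
    (pU w1 != 0 \/ pV w1 != 0) -> (pU w2 != 0 \/ pV w2 != 0) ->
    (lr_ratio (pU w1) (pV w1) <= lr_ratio (pU w2) (pV w2))%E.

Section Process.
Context {d : measure_display} {Omega : measurableType d} (P : probability Omega R).
Variable X : R -> Omega -> nat.

Definition pmfX (t : R) (k : nat) : R := fine (P [set w | X t w = k]).

Definition momX (k : nat) (t : R) : R :=
  fine (\int[P]_w ((X t w)%:R ^+ k)%:E).
End Process.

Section Predator.
Variables (fA : R -> R) (phi : R -> R) (p : R -> R -> R).

Definition Zc (t : R) : R :=
  fine (\int[leb]_(u in `[0, +oo[) (p u t * fA u)%:E).

Definition psi (t : R) : R := phi t * Zc t.

(** density of the age A~_t of a prey consumed at predator age t *)
Definition gA (t : R) (a : R) : R := p a t * fA a / Zc t.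

Definition EA (t : R) : R :=
  fine (\int[leb]_(a in `[0, +oo[) (a * gA t a)%:E).

(** E(X~_t ^ k), where X~_t = X_{A~_t} with A~_t independent of X
    (iterated integral over the product of P and the law of A~_t). *)
Definition EXt (mX : nat -> R -> R) (k : nat) (t : R) : R :=
  fine (\int[leb]_(a in `[0, +oo[) (mX k a * gA t a)%:E).

(** E(Y_t) and var(Y_t) of the compound Poisson burden *)
Definition EY (mX : nat -> R -> R) (t : R) : R :=
  fine (\int[leb]_(s in `[0, t]) (EXt mX 1 s * psi s)%:E).
Definition varY (mX : nat -> R -> R) (t : R) : R :=
  fine (\int[leb]_(s in `[0, t]) (EXt mX 2 s * psi s)%:E).
End Predator.
End Defs.

Section Regularity.
Variable R : realType.
Local Notation leb := (@lebesgue_measure R).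
Local Open Scope classical_set_scope.
Local Open Scope ring_scope.

(** Standing regularity assumptions for one predator (well-defined model,
    finite moments, positive normalising denominators). [mX] is the moment
    function k t |-> E(X_t^k). *)
Definition predator_regular (fA phi : R -> R) (p : R -> R -> R)
    (mX : nat -> R -> R) : Prop :=
  (forall t : R, 0 <= t -> 0 <= phi t) /\
      (forall u t : R, 0 <= u -> 0 <= t -> 0 <= p u t <= 1) /\
      (forall t : R, 0 <= t -> measurable_fun (`[0, +oo[ : set R) (fun u => p u t)) /\
      (forall t : R, 0 <= t -> 0 < Zc fA p t) /\
      (forall t : R, 0 <= t ->
         leb.-integrable `[0, +oo[ (fun a => (a * gA fA p t a)%:E)) /\
      (forall (k : nat) (t : R), (0 < k <= 2)%N -> 0 <= t ->
         leb.-integrable `[0, +oo[ (fun a => (mX k a * gA fA p t a)%:E)) /\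
      (forall (k : nat) (t : R), (0 < k <= 2)%N -> 0 <= t ->
         leb.-integrable `[0, t] (fun s => (EXt fA p mX k s * psi fA phi p s)%:E)).
End Regularity.

(* Everything rests on one inequality: if g1 <=lr g2 and v/u is non-decreasing,
   then  int u g2 * int v g1 <= int u g1 * int v g2,  since the kernel
   (u x v y - u y v x)(g1 x g2 y - g1 y g2 x) is non-negative and its double
   integral is twice the difference of the two sides.
   - With u = 1, v = id on the consumed ages it gives E A~1 <= E A~2, hence
     psi1 >= psi2 because E A~1 psi1 = E A~2 psi2.
   - With u = n, v = n^2 on the laws X_x <=lr X_y of Assumption (A) it shows
     that E(X_t^2)/E(X_t) = E(X_t^2)/(c t) is non-decreasing.
   - With u = id, v = E(X_.^2) on the ages it then gives
     E(X~1_s^2) psi1(s) <= E(X~2_s^2) psi2(s).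
   Since E(X~i_s) = c E(A~i_s), the means E(Y1_t) and E(Y2_t) coincide, and
   integrating the last inequality over [0, t] compares the variances. *)

From HB Require Import structures.
From mathcomp Require Import all_boot all_order all_algebra.
From mathcomp Require Import all_classical all_reals all_analysis.
From mathcomp Require Import measurable_realfun ring lra.
Set Implicit Arguments.
Unset Strict Implicit.
Unset Printing Implicit Defensive.

Import Order.TTheory GRing.Theory Num.Theory.
Local Open Scope classical_set_scope.
Local Open Scope ring_scope.

Section Rintegral_cross.
Context d (T : measurableType d) (R : realType) (mu : {measure set T -> \bar R}).
Variable D : set T.
Hypothesis mD : measurable D.
Local Notation integrable f := (mu.-integrable D (EFin \o f)).
Implicit Types f g u v : T -> R.

Lemma integrableZ a f : integrable f -> integrable (fun x => a * f x).
Proof.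
move=> intf; have -> : EFin \o (fun x => a * f x) = (fun x => a%:E * (EFin \o f) x)%E.
  by apply/funext => x; rewrite /= EFinM.
exact: integrableZl.
Qed.

Lemma integrableZD a b f g : integrable f -> integrable g ->
  integrable (fun x => a * f x + b * g x).
Proof.
move=> intf intg; have -> : EFin \o (fun x => a * f x + b * g x) =
    (EFin \o (fun x => a * f x)) \+ (EFin \o (fun x => b * g x)).
  by apply/funext => x; rewrite /= EFinD.
by apply: integrableD => //; exact: integrableZ.
Qed.

Lemma RintegralZD a b f g : integrable f -> integrable g ->
  \int[mu]_(x in D) (a * f x + b * g x) =
  a * \int[mu]_(x in D) f x + b * \int[mu]_(x in D) g x.
Proof.
by move=> intf intg; rewrite RintegralD ?RintegralZl //; exact: integrableZ.
Qed.

Lemma RintegralZD2 a b a' b' f g f' g' :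
  integrable f -> integrable g -> integrable f' -> integrable g' ->
  \int[mu]_(x in D) ((a * f x + b * g x) + (a' * f' x + b' * g' x)) =
  (a * \int[mu]_(x in D) f x + b * \int[mu]_(x in D) g x) +
  (a' * \int[mu]_(x in D) f' x + b' * \int[mu]_(x in D) g' x).
Proof.
move=> intf intg intf' intg'.
by rewrite RintegralD ?RintegralZD //; exact: integrableZD.
Qed.

(* Integrating the kernel in [y] first needs only one-variable linearity. *)
Lemma Rintegral_cross_le u v g1 g2 :
  integrable (fun x => u x * g1 x) -> integrable (fun x => u x * g2 x) ->
  integrable (fun x => v x * g1 x) -> integrable (fun x => v x * g2 x) ->
  (forall x y, D x -> D y ->
     0 <= (u x * v y - u y * v x) * (g1 x * g2 y - g1 y * g2 x)) ->
  \int[mu]_(x in D) (u x * g2 x) * \int[mu]_(x in D) (v x * g1 x) <=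
  \int[mu]_(x in D) (u x * g1 x) * \int[mu]_(x in D) (v x * g2 x).
Proof.
move=> iu1 iu2 iv1 iv2 kernel_ge0.
set Iu1 := \int[mu]_(x in D) (u x * g1 x); set Iu2 := \int[mu]_(x in D) (u x * g2 x).
set Iv1 := \int[mu]_(x in D) (v x * g1 x); set Iv2 := \int[mu]_(x in D) (v x * g2 x).
have inner x : D x ->
    0 <= (Iv2 * (u x * g1 x) + - Iv1 * (u x * g2 x)) +
         (- Iu2 * (v x * g1 x) + Iu1 * (v x * g2 x)).
  move=> Dx; have -> : (Iv2 * (u x * g1 x) + - Iv1 * (u x * g2 x)) +
                       (- Iu2 * (v x * g1 x) + Iu1 * (v x * g2 x)) =
      (u x * g1 x * Iv2 + - (u x * g2 x) * Iv1) +
      (- (v x * g1 x) * Iu2 + v x * g2 x * Iu1) by ring.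
  rewrite -RintegralZD2 //; apply: Rintegral_ge0 => y Dy.
  rewrite [leRHS](_ : _ = (u x * v y - u y * v x) * (g1 x * g2 y - g1 y * g2 x)).
    exact: kernel_ge0.
  by ring.
by have := Rintegral_ge0 mu inner; rewrite RintegralZD2 // -/Iu1 -/Iu2 -/Iv1 -/Iv2; lra.
Qed.

Lemma Rintegral_cross_le_total (le : rel T) u v g1 g2 : total le ->
  integrable (fun x => u x * g1 x) -> integrable (fun x => u x * g2 x) ->
  integrable (fun x => v x * g1 x) -> integrable (fun x => v x * g2 x) ->
  (forall x y, D x -> D y -> le x y -> u y * v x <= u x * v y) ->
  (forall x y, D x -> D y -> le x y -> g1 y * g2 x <= g1 x * g2 y) ->
  \int[mu]_(x in D) (u x * g2 x) * \int[mu]_(x in D) (v x * g1 x) <=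
  \int[mu]_(x in D) (u x * g1 x) * \int[mu]_(x in D) (v x * g2 x).
Proof.
move=> le_total iu1 iu2 iv1 iv2 uv_mono g_mono.
apply: Rintegral_cross_le => // x y Dx Dy.
have [xy|yx] := orP (le_total x y).
  by rewrite mulr_ge0 // subr_ge0 ?uv_mono ?g_mono.
by rewrite mulr_le0 // subr_le0 ?uv_mono ?g_mono.
Qed.

End Rintegral_cross.

Lemma lr_le_cross (R : realType) dd (T : porderType dd) (D : set T) (pU pV : T -> R) :
  lr_le D pU pV -> (forall w, D w -> 0 <= pU w) -> (forall w, D w -> 0 <= pV w) ->
  forall x y, D x -> D y -> (x <= y)%O -> pU y * pV x <= pU x * pV y.
Proof.
move=> lrUV U_ge0 V_ge0 x y Dx Dy xy.
have [->|Uy0] := eqVneq (pU y) 0; first by rewrite mul0r mulr_ge0 ?U_ge0 ?V_ge0.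
have [->|Vx0] := eqVneq (pV x) 0; first by rewrite mulr0 mulr_ge0 ?U_ge0 ?V_ge0.
have := lrUV x y Dx Dy xy (or_intror Vx0) (or_introl Uy0).
rewrite /lr_ratio (negbTE Uy0).
have [->|Ux0] := eqVneq (pU x) 0; first by rewrite leye_eq.
have Ux_gt0 : 0 < pU x by rewrite lt_neqAle eq_sym Ux0 U_ge0.
have Uy_gt0 : 0 < pU y by rewrite lt_neqAle eq_sym Uy0 U_ge0.
rewrite lee_fin ler_pdivrMr // mulrAC ler_pdivlMr //.
by rewrite mulrC [pU x * _]mulrC.
Qed.

Section DiscreteLaw.
Context (R : realType) d (Omega : measurableType d) (P : probability Omega R).
Variables (X : R -> Omega -> nat) (t : R).
Hypothesis mXt : measurable_fun setT (fun w => ((X t w)%:R : R)).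

Lemma measurable_level n : measurable [set w | X t w = n].
Proof.
have := mXt measurableT (measurable_set1 (n%:R : R)).
congr measurable; apply/seteqP; split => w /=.
  by move=> [_ /eqP]; rewrite eqr_nat => /eqP.
by move=> ->.
Qed.

Lemma pmfX_ge0 n : 0 <= pmfX P X t n.
Proof. exact: fine_ge0. Qed.

Lemma integral_pmfX (f : nat -> R) : (forall n, 0 <= f n) ->
  (\int[P]_w (f (X t w))%:E = \int[counting]_n (f n * pmfX P X t n)%:E)%E.
Proof.
move=> f_ge0; rewrite ge0_integral_count; last first.
  by move=> n; rewrite lee_fin mulr_ge0 ?pmfX_ge0.
have mf : measurable_fun setT (fun w => f (X t w)).
  move=> _ A mA; rewrite setTI.
  have -> : (fun w => f (X t w)) @^-1` A =
      \bigcup_(n in [set n | A (f n)]) [set w | X t w = n].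
    by apply/seteqP; split => w /=; [move=> Aw; exists (X t w) | case=> n /= An ->].
  by apply: bigcup_measurable => n _; exact: measurable_level.
have cover : \bigcup_n [set w | X t w = n] = [set: Omega].
  by apply/seteqP; split => w // _; exists (X t w).
rewrite -cover ge0_integral_bigcup //.
- apply: eq_eseriesr => n _.
  rewrite (eq_integral (fun _ => (f n)%:E)); last by move=> w /set_mem /= ->.
  rewrite integral_cst; last exact: measurable_level.
  rewrite /pmfX EFinM fineK // fin_num_measure //; exact: measurable_level.
- exact: measurable_level.
- by rewrite cover; exact/measurable_EFinP.
- by move=> w _; rewrite lee_fin.
- by move=> i j _ _ [w [<- <-]].
Qed.

End DiscreteLaw.

Lemma momX_ge0 (R : realType) d (Omega : measurableType d) (P : probability Omega R)
    (X : R -> Omega -> nat) k t :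
  0 <= momX P X k t.
Proof. by rewrite fine_ge0 // integral_ge0 // => w _; rewrite lee_fin exprn_ge0. Qed.

Lemma natr_expn_le_sqr (R : realType) (n k : nat) : (0 < k <= 2)%N ->
  (n%:R : R) ^+ k <= n%:R ^+ 2.
Proof.
move=> /andP[k_gt0 k_le2]; rewrite -!natrX ler_nat.
have [->|n_gt0] := posnP n; first by rewrite !exp0n.
exact: leq_pexp2l.
Qed.

Section MomentRatio.
Context (R : realType) d (Omega : measurableType d) (P : probability Omega R).
Variable X : R -> Omega -> nat.
Hypothesis mX : forall {t}, 0 <= t -> measurable_fun setT (fun w => ((X t w)%:R : R)).
Hypothesis iX : forall {t}, 0 <= t ->
  P.-integrable setT (fun w => (((X t w)%:R : R) ^+ 2)%:E).

Lemma integrable_counting_moment t k : 0 <= t -> (0 < k <= 2)%N ->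
  counting.-integrable setT (EFin \o (fun n : nat => (n%:R : R) ^+ k * pmfX P X t n)).
Proof.
move=> t0 k12; apply/integrableP; split => //.
under eq_integral => n _ do
  rewrite /= ger0_norm ?mulr_ge0 ?exprn_ge0 ?pmfX_ge0 //.
rewrite -integral_pmfX; [|exact: mX|by move=> n; rewrite exprn_ge0].
have /integrableP[_ X2_fin] := iX t0.
apply: le_lt_trans X2_fin; apply: ge0_le_integral => //.
- by apply/measurable_EFinP; apply: measurable_funX; exact: mX.
- by apply/measurableT_comp => //; apply/measurable_EFinP/measurable_funX; exact: mX.
- by move=> w _; rewrite gee0_abs ?lee_fin ?exprn_ge0 ?natr_expn_le_sqr.
Qed.

Lemma momX_counting t k : 0 <= t ->
  momX P X k t = \int[counting]_n ((n%:R : R) ^+ k * pmfX P X t n).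
Proof. by move=> t0; rewrite /momX (integral_pmfX P (mX t0) (f := fun n => n%:R ^+ k)). Qed.

Lemma momX12_cross_le x y : 0 <= x -> x <= y ->
  lr_le setT (pmfX P X x) (pmfX P X y) ->
  momX P X 1 y * momX P X 2 x <= momX P X 1 x * momX P X 2 y.
Proof.
move=> x0 xy lrXY; have y0 := le_trans x0 xy.
rewrite !momX_counting //.
apply: (Rintegral_cross_le_total measurableT (le := (<=%O : rel nat)) le_total);
  try exact: integrable_counting_moment.
- move=> m n _ _; rewrite leEnat -(ler_nat R) => mn.
  have mn_ge0 : 0 <= m%:R * n%:R :> R by [].
  by rewrite !expr1 !expr2; nra.
- by apply: lr_le_cross => // *; exact: pmfX_ge0.
Qed.

Lemma momX2_cross_le c x y : 0 < c -> (forall t, 0 <= t -> momX P X 1 t = c * t) ->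
  0 <= x -> x <= y -> lr_le setT (pmfX P X x) (pmfX P X y) ->
  y * momX P X 2 x <= x * momX P X 2 y.
Proof.
move=> c_gt0 mean_lin x0 xy lrXY.
have := momX12_cross_le x0 xy lrXY.
by rewrite !mean_lin ?(le_trans x0 xy) // -!mulrA ler_pM2l.
Qed.

End MomentRatio.

Section Halfline.
Variable R : realType.
Local Notation leb := (@lebesgue_measure R).
Local Notation D := (`[0, +oo[%classic : set R).

Lemma in_halfline (x : R) : D x <-> 0 <= x.
Proof. by rewrite /= in_itv /= andbT. Qed.

Lemma measurable_halfline : measurable D.
Proof. exact: measurable_itv. Qed.

Lemma Rintegral_id_mul_gt0 (h : R -> R) : (forall x, D x -> 0 <= h x) ->
  leb.-integrable D (EFin \o h) -> leb.-integrable D (EFin \o (fun x => x * h x)) ->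
  0 < \int[leb]_(x in D) h x -> 0 < \int[leb]_(x in D) (x * h x).
Proof.
move=> h_ge0 inth intxh int_gt0.
rewrite lt_neqAle Rintegral_ge0 ?andbT; last first.
  by move=> x Dx; rewrite mulr_ge0 ?h_ge0 -?in_halfline.
apply/eqP => /esym Rint0.
have abs0 : (\int[leb]_(x in D) `|(x * h x)%:E| = 0)%E.
  have <- : (\int[leb]_(x in D) (x * h x)%:E = 0)%E.
    rewrite -[LHS]fineK; first exact: (congr1 EFin Rint0).
    apply: integrable_fin_num; first exact: measurable_halfline.
    exact: intxh.
  apply: eq_integral => x /set_mem Dx.
  by rewrite gee0_abs // lee_fin mulr_ge0 ?h_ge0 -?in_halfline.
have xh0 := (ae_eq_integral_abs leb measurable_halfline (measurable_int leb intxh)).1 abs0.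
have x_neq0 : {ae leb, forall x : R, x != 0}.
  exists [set 0]; split; [exact: measurable_set1|exact: lebesgue_measure_set1|].
  by move=> x /negP; rewrite negbK => /eqP.
have h0 : ae_eq leb D (EFin \o h) (cst 0%E).
  apply: filterS2 xh0 x_neq0 => x xh_0 x0 Dx.
  by move/eqP: (xh_0 Dx); rewrite /= eqe mulf_eq0 (negbTE x0) => /eqP ->.
move: int_gt0; rewrite /Rintegral.
rewrite (@ae_eq_integral _ _ _ leb _ (cst 0%E) _ measurable_halfline (measurable_int leb inth) (measurable_cst _) h0).
by rewrite integral0 ltxx.
Qed.

End Halfline.

Section Predator.
Variable R : realType.
Local Notation leb := (@lebesgue_measure R).
Local Notation D := (`[0, +oo[%classic : set R).
Variables (fA phi : R -> R) (p : R -> R -> R) (mX : nat -> R -> R).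
Hypothesis fA_ge0 : forall a, 0 <= a -> 0 <= fA a.
Hypothesis mfA : measurable_fun D fA.
Hypothesis reg : predator_regular fA phi p mX.

Let phi_ge0 t : 0 <= t -> 0 <= phi t.
Proof. by case: reg => + _; apply. Qed.

Let p_ge0 u t : 0 <= u -> 0 <= t -> 0 <= p u t.
Proof. by move=> u0 t0; case: reg => _ [/(_ u t u0 t0)/andP[]]. Qed.

Let measurable_p t : 0 <= t -> measurable_fun D (fun u => p u t).
Proof. by case: reg => _ [_ [+ _]]; apply. Qed.

Let Zc_gt0 t : 0 <= t -> 0 < Zc fA p t.
Proof. by case: reg => _ [_ [_ [+ _]]]; apply. Qed.

Lemma integrable_id_gA t : 0 <= t ->
  leb.-integrable D (EFin \o (fun a => a * gA fA p t a)).
Proof. by case: reg => _ [_ [_ [_ [+ _]]]]; apply. Qed.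

Lemma integrable_moment_gA k t : (0 < k <= 2)%N -> 0 <= t ->
  leb.-integrable D (EFin \o (fun a => mX k a * gA fA p t a)).
Proof. by case: reg => _ [_ [_ [_ [_ [+ _]]]]]; apply. Qed.

Lemma integrable_EXt_psi k t : (0 < k <= 2)%N -> 0 <= t ->
  leb.-integrable `[0, t] (EFin \o (fun s => EXt fA p mX k s * psi fA phi p s)).
Proof. by case: reg => _ [_ [_ [_ [_ [_ +]]]]]; apply. Qed.

Lemma gA_ge0 t a : 0 <= t -> 0 <= a -> 0 <= gA fA p t a.
Proof.
by move=> t0 a0; rewrite /gA divr_ge0 ?mulr_ge0 ?fA_ge0 ?p_ge0 ?(ltW (Zc_gt0 t0)).
Qed.

Lemma psi_ge0 t : 0 <= t -> 0 <= psi fA phi p t.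
Proof. by move=> t0; rewrite /psi mulr_ge0 ?phi_ge0 ?(ltW (Zc_gt0 t0)). Qed.

Lemma integrable_p_fA t : 0 <= t ->
  leb.-integrable D (EFin \o (fun u => p u t * fA u)).
Proof.
move=> t0; have pfA_ge0 u : D u -> 0 <= p u t * fA u.
  by move=> /in_halfline u0; rewrite mulr_ge0 ?p_ge0 ?fA_ge0.
apply/integrableP; split.
  by apply/measurable_EFinP; apply: measurable_funM => //; exact: measurable_p.
under eq_integral => u /set_mem Du do rewrite /= ger0_norm ?pfA_ge0 //.
(* [Zc] is the [fine] of this integral and [fine +oo = 0], so [Zc > 0]
   excludes divergence. *)
have := Zc_gt0 t0; rewrite /Zc.
have : (0 <= \int[leb]_(u in D) (p u t * fA u)%:E)%E.
  by apply: integral_ge0 => u Du; rewrite lee_fin pfA_ge0.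
by case: (\int[leb]_(u in D) _)%E => [r _ _|_|//]; [exact: ltry|rewrite ltxx].
Qed.

Lemma integrable_gA t : 0 <= t -> leb.-integrable D (EFin \o gA fA p t).
Proof.
move=> t0; have -> : EFin \o gA fA p t =
    (fun a => (EFin \o (fun u => (p u t * fA u)%R)) a * (Zc fA p t)^-1%:E)%E.
  by apply/funext => a; rewrite /= /gA EFinM.
by apply: integrableZr => //; exact: integrable_p_fA.
Qed.

Lemma Rintegral_gA t : 0 <= t -> \int[leb]_(a in D) gA fA p t a = 1.
Proof.
move=> t0; rewrite /gA RintegralZr //; last exact: integrable_p_fA.
by rewrite -/(Zc fA p t) mulfV // gt_eqF ?Zc_gt0.
Qed.

Lemma EA_gt0 t : 0 <= t -> 0 < EA fA p t.
Proof.
move=> t0; apply: Rintegral_id_mul_gt0.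
- by move=> a /in_halfline; exact: gA_ge0.
- exact: integrable_gA.
- exact: integrable_id_gA.
- by rewrite Rintegral_gA.
Qed.

Lemma EXt_mean_lin c t : (forall a, 0 <= a -> mX 1 a = c * a) -> 0 <= t ->
  EXt fA p mX 1 t = c * EA fA p t.
Proof.
move=> mean_lin t0; rewrite /EXt -RintegralZl //; last exact: integrable_id_gA.
by apply: eq_Rintegral => a /set_mem /in_halfline a0; rewrite mean_lin // mulrA.
Qed.

Lemma EY_mean_lin c t : (forall a, 0 <= a -> mX 1 a = c * a) ->
  EY fA phi p mX t = \int[leb]_(s in `[0, t]) (c * (EA fA p s * psi fA phi p s)).
Proof.
move=> mean_lin; apply: eq_Rintegral => s /set_mem; rewrite /= in_itv /= => /andP[s0 _].
by rewrite (EXt_mean_lin mean_lin) // -mulrA.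
Qed.

Lemma EY_ge0 c t : 0 <= c -> (forall a, 0 <= a -> mX 1 a = c * a) ->
  0 <= EY fA phi p mX t.
Proof.
move=> c_ge0 mean_lin; rewrite (EY_mean_lin _ mean_lin).
apply: Rintegral_ge0 => s; rewrite /= in_itv /= => /andP[s0 _].
by rewrite mulr_ge0 // mulr_ge0 ?psi_ge0 // ltW // EA_gt0.
Qed.

Lemma mean_rate_neq0 c : (forall a, 0 <= a -> mX 1 a = c * a) ->
  0 < EY fA phi p mX 1 -> c != 0.
Proof.
move=> mean_lin; apply: contraTneq => c0.
rewrite (EY_mean_lin _ mean_lin) c0.
by under eq_Rintegral do rewrite mul0r; rewrite /Rintegral integral0 ltxx.
Qed.

End Predator.

Section TwoPredators.
Variable R : realType.
Local Notation leb := (@lebesgue_measure R).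
Local Notation D := (`[0, +oo[%classic : set R).
Variables (fA phi1 phi2 : R -> R) (p1 p2 : R -> R -> R) (mX : nat -> R -> R).
Hypothesis fA_ge0 : forall a, 0 <= a -> 0 <= fA a.
Hypothesis mfA : measurable_fun D fA.
Hypothesis reg1 : predator_regular fA phi1 p1 mX.
Hypothesis reg2 : predator_regular fA phi2 p2 mX.
Hypothesis lrA : forall t, 0 <= t -> lr_le D (gA fA p1 t) (gA fA p2 t).
Hypothesis flux_eq : forall t, 0 <= t ->
  EA fA p1 t * psi fA phi1 p1 t = EA fA p2 t * psi fA phi2 p2 t.

Lemma gA_Rintegral_cross u v t : 0 <= t ->
  leb.-integrable D (EFin \o (fun a => u a * gA fA p1 t a)) ->
  leb.-integrable D (EFin \o (fun a => u a * gA fA p2 t a)) ->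
  leb.-integrable D (EFin \o (fun a => v a * gA fA p1 t a)) ->
  leb.-integrable D (EFin \o (fun a => v a * gA fA p2 t a)) ->
  (forall x y, 0 <= x -> x <= y -> u y * v x <= u x * v y) ->
  \int[leb]_(a in D) (u a * gA fA p2 t a) * \int[leb]_(a in D) (v a * gA fA p1 t a) <=
  \int[leb]_(a in D) (u a * gA fA p1 t a) * \int[leb]_(a in D) (v a * gA fA p2 t a).
Proof.
move=> t0 iu1 iu2 iv1 iv2 uv_mono.
apply: (@Rintegral_cross_le_total _ _ _ leb D _ (<=%O : rel R)) => //.
- by move=> x y; exact: le_total.
- by move=> x y /in_halfline x0 _; exact: uv_mono.
- apply: lr_le_cross (lrA t0) _ _ => a /in_halfline.
    exact: (gA_ge0 fA_ge0 reg1 t0).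
  exact: (gA_ge0 fA_ge0 reg2 t0).
Qed.

Lemma EA_le t : 0 <= t -> EA fA p1 t <= EA fA p2 t.
Proof.
move=> t0; have one_mul p : (fun a => 1 * gA fA p t a) = gA fA p t.
  by apply/funext => a; rewrite mul1r.
have := gA_Rintegral_cross (u := fun=> 1) (v := fun a => a) t0.
rewrite !one_mul (Rintegral_gA fA_ge0 mfA reg1 t0) (Rintegral_gA fA_ge0 mfA reg2 t0).
rewrite !mul1r; apply.
- exact: (integrable_gA fA_ge0 mfA reg1 t0).
- exact: (integrable_gA fA_ge0 mfA reg2 t0).
- exact: (integrable_id_gA reg1 t0).
- exact: (integrable_id_gA reg2 t0).
- by move=> x y _ xy; rewrite !mul1r.
Qed.

Lemma psi_le t : 0 <= t -> psi fA phi2 p2 t <= psi fA phi1 p1 t.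
Proof.
move=> t0; have := flux_eq t0; have := EA_le t0.
have := EA_gt0 fA_ge0 mfA reg1 t0; have := psi_ge0 reg2 t0.
nra.
Qed.

Lemma EXt2_psi_le t : (forall x y, 0 <= x -> x <= y -> y * mX 2 x <= x * mX 2 y) ->
  0 <= t -> EXt fA p1 mX 2 t * psi fA phi1 p1 t <= EXt fA p2 mX 2 t * psi fA phi2 p2 t.
Proof.
move=> m2_mono t0.
have cross : EA fA p2 t * EXt fA p1 mX 2 t <= EA fA p1 t * EXt fA p2 mX 2 t.
  apply: (gA_Rintegral_cross (u := fun a => a) (v := mX 2)) m2_mono => //.
  - exact: (integrable_id_gA reg1 t0).
  - exact: (integrable_id_gA reg2 t0).
  - exact: (integrable_moment_gA reg1 (k := 2) isT t0).
  - exact: (integrable_moment_gA reg2 (k := 2) isT t0).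
rewrite -(ler_pM2l (EA_gt0 fA_ge0 mfA reg2 t0)) mulrA.
have -> : EA fA p2 t * (EXt fA p2 mX 2 t * psi fA phi2 p2 t) =
    EA fA p1 t * EXt fA p2 mX 2 t * psi fA phi1 p1 t.
  by rewrite mulrCA -flux_eq // mulrCA mulrA.
by rewrite ler_wpM2r ?(psi_ge0 reg1 t0).
Qed.

Lemma EY_eq c t : (forall a, 0 <= a -> mX 1 a = c * a) ->
  EY fA phi1 p1 mX t = EY fA phi2 p2 mX t.
Proof.
move=> mean_lin; rewrite (EY_mean_lin reg1 t mean_lin) (EY_mean_lin reg2 t mean_lin).
by apply: eq_Rintegral => s /set_mem; rewrite /= in_itv /= => /andP[s0 _]; rewrite flux_eq.
Qed.

End TwoPredators.

Theorem theorem3 (R : realType) (d : measure_display) (Omega : measurableType d)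
  (P : probability Omega R) (X : R -> Omega -> nat)
  (fA phi1 phi2 : R -> R) (p1 p2 : R -> R -> R) :
  (* the parasite burden process X: integer valued, non-decreasing, X_0 = 0,
     finite moments *)
  (forall t, 0 <= t -> measurable_fun setT (fun w => ((X t w)%:R : R))) ->
  (forall w, X 0 w = 0%N) ->
  (forall s t w, 0 <= s -> s <= t -> (X s w <= X t w)%N) ->
  (forall t, 0 <= t -> P.-integrable setT (fun w => (((X t w)%:R : R) ^+ 2)%:E)) ->
  (* f_A is a probability density on [0, oo) *)
  measurable_fun (`[0, +oo[ : set R) fA ->
  (forall a, 0 <= a -> 0 <= fA a) ->
  (\int[@lebesgue_measure R]_(a in (`[0%R, +oo[ : set R)) (fA a)%:E = 1)%E ->
  (* the two predators: well-defined model, finite moments *)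
  predator_regular fA phi1 p1 (momX P X) ->
  predator_regular fA phi2 p2 (momX P X) ->
  (* denominators E(Y_{i,t}) positive *)
  (forall t, 0 < t -> 0 < EY fA phi1 p1 (momX P X) t) ->
  (forall t, 0 < t -> 0 < EY fA phi2 p2 (momX P X) t) ->
  (* Assumption (A) *)
  (forall s t, 0 <= s -> s <= t -> lr_le setT (pmfX P X s) (pmfX P X t)) ->
  (* Assumption (B) for predators 1 and 2 *)
  (forall s t, 0 <= s -> s < t ->
     lr_le (`[0, +oo[ : set R) (fun u => p1 u s) (fun u => p1 u t)) ->
  (forall s t, 0 <= s -> s < t ->
     lr_le (`[0, +oo[ : set R) (fun u => p2 u s) (fun u => p2 u t)) ->
  (* E(X_t) proportional to t *)
  (exists c : R, forall t, 0 <= t -> momX P X 1 t = c * t) ->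
  (* A~_{1,t} <=_lr A~_{2,t} *)
  (forall t, 0 <= t -> lr_le (`[0, +oo[ : set R) (gA fA p1 t) (gA fA p2 t)) ->
  (forall t, 0 <= t ->
     EA fA p1 t * psi fA phi1 p1 t = EA fA p2 t * psi fA phi2 p2 t) ->
  forall t, 0 <= t ->
    psi fA phi2 p2 t <= psi fA phi1 p1 t /\
    varY fA phi1 p1 (momX P X) t / EY fA phi1 p1 (momX P X) t <=
    varY fA phi2 p2 (momX P X) t / EY fA phi2 p2 (momX P X) t.
Proof.
move=> mX _ _ iX mfA fA_ge0 _ reg1 reg2 EY1_gt0 _ lrX _ _ [c mean_lin] lrA flux_eq t t0.
split; first exact: (psi_le fA_ge0 mfA reg1 reg2 lrA flux_eq t0).
have c_ge0 : 0 <= c by rewrite -[c]mulr1 -mean_lin ?momX_ge0.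
have c_gt0 : 0 < c.
  by rewrite lt_neqAle eq_sym (mean_rate_neq0 reg1 mean_lin (EY1_gt0 1 ltr01)).
have m2_mono x y : 0 <= x -> x <= y -> y * momX P X 2 x <= x * momX P X 2 y.
  by move=> x0 xy; exact: (momX2_cross_le mX iX c_gt0 mean_lin x0 xy (lrX x y x0 xy)).
rewrite (EY_eq reg1 reg2 flux_eq t mean_lin) ler_wpM2r //.
  by rewrite invr_ge0 (EY_ge0 fA_ge0 mfA reg2 t c_ge0 mean_lin).
apply: le_Rintegral => //.
- exact: (integrable_EXt_psi reg1 (k := 2) isT t0).
- exact: (integrable_EXt_psi reg2 (k := 2) isT t0).
- move=> s; rewrite /= in_itv /= => /andP[s0 _].
  exact: (EXt2_psi_le fA_ge0 mfA reg1 reg2 lrA flux_eq m2_mono s0).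
Qed.
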